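(* Let $n\geqslant 2$, $P=\mathcal F(\Delta^{n-1})$, and $D$ a diagram on $P^*$ with values in finite sets whose associated sheaf $\mathcal D$ is inhabited and flabby. Let $I_0\in P$ satisfy $|D(I_0)|\geqslant 2$ and $|D(J)|=1$ for every nonempty $J\subsetneq I_0$. Write $D(I_0)=A_1\sqcup A_2$ with $A_1,A_2\neq\emptyset$. For $\varepsilon\in\{1,2\}$ define $D_\varepsilon(J)=D(J\geqslant I_0)^{-1}(A_\varepsilon)$ if $J\supseteq I_0$, and $D_\varepsilon(J)=D(J)$ otherwise, with structure maps the restrictions of those of $D$ (so $D_\varepsilon$ is a subdiagram of $D$). Then the sheaves $\mathcal D_1,\mathcal D_2$ associated to $D_1,D_2$ are inhabited and flabby.
   Context: $\mathcal F(\Delta^{n-1})$ is the poset of nonempty subsets of $[n]$ ordered by inclusion; $P^*$ is its reverse. A diagram on $P^*$ assigns finite sets $D(I)$ and maps $D(J\geqslant I)\colon D(J)\to D(I)$ for $I\subseteq J$, functorially. Open sets of the Alexandrov space $X_{P^*}$ are the lower ideals of $P$ (i.e. simplicial subcomplexes of $\Delta^{n-1}$). The associated sheaf assigns to nonempty open $U$ the set $\mathcal D(U)=\{(v_I)_{I\in U}\in\prod_{I\in U}D(I): D(J\geqslant I)(v_J)=v_I\text{ for } I\subseteq J \text{ in }U\}$ with projection restrictions. Inhabited: $\mathcal D(U)\neq\emptyset$ for all nonempty open $U$; flabby: every restriction map $\mathcal D(U)\to\mathcal D(V)$, $\emptyset\neq V\subseteq U$ open, is surjective. *)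

From mathcomp Require Import all_boot.
Set Implicit Arguments. Unset Strict Implicit. Unset Printing Implicit Defensive.

(* P = F(Delta^{n-1}) : nonempty subsets of [n] = 'I_n, ordered by inclusion.
   Values at set0, or of f I J when ~ I \subset J, are irrelevant junk. *)

Definition is_diagram (n : nat) (D : {set 'I_n} -> finType)
  (f : forall I J : {set 'I_n}, D J -> D I) : Prop :=
  (forall I : {set 'I_n}, I != set0 -> forall x : D I, f I I x = x) /\
  (forall I J K : {set 'I_n}, I != set0 -> I \subset J -> J \subset K ->
     forall x : D K, f I J (f J K x) = f I K x).

(* Open sets of X_{P^*}: lower ideals of P (sets of nonempty faces closed
   under passing to nonempty subfaces). *)
Definition is_open (n : nat) (U : {set {set 'I_n}}) : Prop :=
  (forall I : {set 'I_n}, I \in U -> I != set0) /\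
  (forall I J : {set 'I_n}, J \in U -> I != set0 -> I \subset J -> I \in U).

(* Sections over U of the sheaf associated to the subdiagram S of D
   (S I \subset D I, structure maps restricted from f).  A family
   (v_I)_{I in U} is encoded by a total dependent function v whose values
   outside U are ignored. *)
Definition is_section (n : nat) (D : {set 'I_n} -> finType)
  (f : forall I J : {set 'I_n}, D J -> D I) (S : forall I, {set D I})
  (U : {set {set 'I_n}}) (v : forall I, D I) : Prop :=
  (forall I : {set 'I_n}, I \in U -> v I \in S I) /\
  (forall I J : {set 'I_n}, I \in U -> J \in U -> I \subset J -> f I J (v J) = v I).

Definition sheaf_inhabited (n : nat) (D : {set 'I_n} -> finType)
  (f : forall I J : {set 'I_n}, D J -> D I) (S : forall I, {set D I}) : Prop :=
  forall U, is_open U -> U != set0 -> exists v, is_section f S U v.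

Definition sheaf_flabby (n : nat) (D : {set 'I_n} -> finType)
  (f : forall I J : {set 'I_n}, D J -> D I) (S : forall I, {set D I}) : Prop :=
  forall U V, is_open U -> is_open V -> V != set0 -> V \subset U ->
  forall v, is_section f S V v ->
  exists w, is_section f S U w /\ (forall I : {set 'I_n}, I \in V -> w I = v I).

Definition full_sub (n : nat) (D : {set 'I_n} -> finType) : forall I, {set D I} :=
  fun I => [set: D I].

Definition restr_sub (n : nat) (D : {set 'I_n} -> finType)
  (f : forall I J : {set 'I_n}, D J -> D I) (I0 : {set 'I_n}) (A : {set D I0})
  : forall J, {set D J} :=
  fun J => if I0 \subset J then [set x | f I0 J x \in A] else [set: D J].

From mathcomp Require Import all_boot.

(* A section of D_A over V extends to U as follows.  Glue to it the section
   J |-> D(J >= I0)(a) over the faces of I0, where a lies in A (and equals the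
   given value at I0 if I0 is in V); the two agree on overlaps because every
   proper face of I0 carries a one-point set.  Flabbiness of the sheaf of D
   extends the glued section to U together with the faces of I0, and since its
   value at I0 is a, it is a section of D_A.  Taking V empty gives inhabitedness. *)

Definition faces {n : nat} (I0 : {set 'I_n}) : {set {set 'I_n}} :=
  [set J | (J != set0) && (J \subset I0)].

Section OpenSets.
Context {n : nat}.
Implicit Types (U V : {set {set 'I_n}}) (K : {set 'I_n}).

Lemma open_set0 : is_open (set0 : {set {set 'I_n}}).
Proof. by split=> [I|I J]; rewrite inE. Qed.

Lemma open_faces K : is_open (faces K).
Proof.
split=> [I | I J]; rewrite !inE; first by case/andP.
by case/andP=> _ JK -> IJ; rewrite (subset_trans IJ JK).
Qed.

Lemma openU {U V : {set {set 'I_n}}} : is_open U -> is_open V -> is_open (U :|: V).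
Proof.
move=> [U0 Uc] [V0 Vc]; split=> [I | I J]; rewrite !inE.
  by case/orP; [apply: U0 | apply: V0].
by case/orP=> JW IN IJ; [rewrite (Uc I J) | rewrite (Vc I J) ?orbT].
Qed.

Lemma faces_subset_open U K : is_open U -> K \in U -> faces K \subset U.
Proof. by case=> _ Uc KU; apply/subsetP=> J; rewrite inE => /andP[]; apply: Uc. Qed.

Lemma face_in_faces K : K != set0 -> K \in faces K.
Proof. by rewrite inE subxx andbT. Qed.

End OpenSets.

Lemma section_subset {n : nat} {D : {set 'I_n} -> finType}
  (f : forall I J : {set 'I_n}, D J -> D I) (S : forall I, {set D I})
  (U U' : {set {set 'I_n}}) (w : forall I, D I) :
  U \subset U' -> is_section f S U' w -> is_section f S U w.
Proof.
move=> /subsetP UU' [Sw Hw]; split=> [I /UU' | I J /UU' IU /UU' JU]; first exact: Sw.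
exact: Hw.
Qed.

Section Extension.
Variables (n : nat) (D : {set 'I_n} -> finType).
Variable f : forall I J : {set 'I_n}, D J -> D I.
Variable I0 : {set 'I_n}.
Hypothesis diagram_f : is_diagram f.
Hypothesis flabby_D : sheaf_flabby f (full_sub D).
Hypothesis I0_neq0 : I0 != set0.
Hypothesis proper_faces_singleton :
  forall J : {set 'I_n}, J != set0 -> J \proper I0 -> #|{: D J}| = 1.

Implicit Types (U V : {set {set 'I_n}}) (v w : forall I, D I).

Lemma glue_faces_section {V v} {a : D I0} :
  is_open V -> is_section f (full_sub D) V v -> (I0 \in V -> v I0 = a) ->
  is_section f (full_sub D) (V :|: faces I0)
    (fun J => if J \in V then v J else f J I0 a).
Proof.
have [f_id f_comp] := diagram_f.
move=> oV [_ v_comp] vI0; split=> [I _ | I J IV' JV' IJ]; first by rewrite inE.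
have IN : I != set0 by case: (openU oV (open_faces I0)) => h _; apply: h.
case: ifP => JV.
  have IV : I \in V by case: oV => _ /(_ I J JV IN IJ).
  by rewrite IV v_comp.
have JI0 : J \subset I0 by move: JV'; rewrite !inE JV => /andP[].
rewrite f_comp //; case: ifP => // IV.
have [/eqP II0 | NI] := boolP (I == I0).
  suff JI : J = I0 by rewrite JI -II0 IV in JV.
  by apply/eqP; rewrite eqEsubset JI0 -II0.
have : #|{: D I}| <= 1.
  by rewrite proper_faces_singleton // properEneq NI (subset_trans IJ JI0).
by move/fintype_le1P; apply.
Qed.

Lemma full_section_extend_at {U V v} {a : D I0} :
  is_open U -> is_open V -> V \subset U -> I0 \in U ->
  is_section f (full_sub D) V v -> (I0 \in V -> v I0 = a) ->
  exists w, [/\ is_section f (full_sub D) U w,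
    forall I, I \in V -> w I = v I & w I0 = a].
Proof.
move=> oU oV VU I0U sv vI0.
have I0V' : I0 \in V :|: faces I0 by rewrite inE face_in_faces ?orbT.
have V'U : V :|: faces I0 \subset U by rewrite subUset VU faces_subset_open.
have [|w [sw wv]] := flabby_D _ _ oU (openU oV (open_faces I0)) _ V'U _
  (glue_faces_section oV sv vI0); first by apply/set0Pn; exists I0.
exists w; split=> // [I IV|]; first by rewrite wv ?inE ?IV.
rewrite wv //; case: ifP => [/vI0 //|_]; by case: diagram_f => ->.
Qed.

Variable A : {set D I0}.
Hypothesis A_neq0 : A != set0.

Lemma restr_section_I0 {U v} :
  is_section f (restr_sub f A) U v -> I0 \in U -> v I0 \in A.
Proof.
case=> Sv _ /Sv; rewrite /restr_sub subxx inE.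
by case: diagram_f => -> // _.
Qed.

Lemma full_section_restr {U w} :
  is_open U -> is_section f (full_sub D) U w -> (I0 \in U -> w I0 \in A) ->
  is_section f (restr_sub f A) U w.
Proof.
move=> [_ Uc] [_ w_comp] wI0; split=> // J JU.
rewrite /restr_sub; case: ifP => [I0J | _]; last by rewrite inE.
have I0U := Uc I0 J JU I0_neq0 I0J.
by rewrite inE w_comp // wI0.
Qed.

Lemma restr_section_extend {U V v} :
  is_open U -> is_open V -> V \subset U -> is_section f (restr_sub f A) V v ->
  exists w, is_section f (restr_sub f A) U w /\ (forall I, I \in V -> w I = v I).
Proof.
move=> oU oV VU sv; have /set0Pn[a0 a0A] := A_neq0.
set U' := U :|: faces I0; have oU' : is_open U' by apply: openU (open_faces I0).
have I0U' : I0 \in U' by rewrite inE face_in_faces ?orbT.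
set a := if I0 \in V then v I0 else a0.
have aA : a \in A by rewrite /a; case: ifP => // /(restr_section_I0 sv).
have sv_full : is_section f (full_sub D) V v by case: sv => _ ?; split=> // I; rewrite inE.
have VU' : V \subset U' by apply: subset_trans VU (subsetUl _ _).
have vI0 : I0 \in V -> v I0 = a by rewrite /a => ->.
have [w [sw wv wI0]] := full_section_extend_at oU' oV VU' I0U' sv_full vI0.
exists w; split=> //; apply: section_subset (subsetUl U (faces I0)) _.
by apply: full_section_restr => // _; rewrite wI0.
Qed.

Lemma restr_sub_inhabited : sheaf_inhabited f (restr_sub f A).
Proof.
have /set0Pn[a0 _] := A_neq0.
move=> U oU _; have empty_section : is_section f (restr_sub f A) set0 (fun J => f J I0 a0).
  by split=> I; rewrite inE.
have [w [sw _]] := restr_section_extend oU open_set0 (sub0set U) empty_section.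
by exists w.
Qed.

Lemma restr_sub_flabby : sheaf_flabby f (restr_sub f A).
Proof. by move=> U V oU oV _ VU v; apply: restr_section_extend. Qed.

End Extension.

Theorem lemma6p2 (n : nat) (D : {set 'I_n} -> finType)
  (f : forall I J : {set 'I_n}, D J -> D I)
  (I0 : {set 'I_n}) (A1 A2 : {set D I0}) :
  2 <= n ->
  is_diagram f ->
  sheaf_inhabited f (full_sub D) ->
  sheaf_flabby f (full_sub D) ->
  I0 != set0 ->
  2 <= #|{: D I0}| ->
  (forall J : {set 'I_n}, J != set0 -> J \proper I0 -> #|{: D J}| = 1) ->
  [disjoint A1 & A2] -> A1 :|: A2 = [set: D I0] ->
  A1 != set0 -> A2 != set0 ->
  (sheaf_inhabited f (restr_sub f A1) /\ sheaf_flabby f (restr_sub f A1)) /\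
  (sheaf_inhabited f (restr_sub f A2) /\ sheaf_flabby f (restr_sub f A2)).
Proof.
move=> _ diagram_f _ flabby_D I0_neq0 _ faces_singleton _ _ A1_neq0 A2_neq0.
have restr_ok (A : {set D I0}) : A != set0 ->
    sheaf_inhabited f (restr_sub f A) /\ sheaf_flabby f (restr_sub f A).
  by move=> A_neq0; split; [apply: restr_sub_inhabited | apply: restr_sub_flabby].
by split; apply: restr_ok.
Qed.
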